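(* Let $G=\{g_1,\dots,g_n\}$ be a finite group and let $S\subseteq G$ be a subset such that $gSg^{-1}=S$ for all $g\in G$, $S$ generates $G$, $S=S^{-1}$ and $1\notin S$. Put $r:=\#S$, and assume the Cayley graph $\mathscr{X}=\mathrm{Cay}(G,S)$ is not a cycle graph (i.e. $\chi(\mathscr{X})\neq 0$). Let $\ell$ be a prime and $\beta:S\to\mathbb{Z}_\ell$ a function such that: (1) $\beta(gag^{-1})=\beta(a)$ for all $g\in G$, $a\in S$; (2) the image of $\beta$ generates $\mathbb{Z}_\ell$ as a $\mathbb{Z}_\ell$-module; (3) $\beta(s^{-1})=-\beta(s)$ for all $s\in S$; (4) the image of $\beta$ lies in $\mathbb{Z}$; (5) there exist $m>0$ and $(h_1,\dots,h_m)\in S^m$ with $h_1\cdots h_m\in S$ and $\beta(h_1\cdots h_m)\not\equiv\sum_{i=1}^m\beta(h_i)\pmod{\ell}$. Let $f_{\mathscr{X},\alpha}(T)$ be the Iwasawa power series of the associated tower, namely the determinant of the $n\times n$ matrix whose $(i,j)$-entry is $r\,\delta_{ij}-\delta_S(g_ig_j^{-1})(1+T)^{\beta(g_ig_j^{-1})}$. Then \[f_{\mathscr{X},\alpha}(T)=\prod_{\chi\in\mathrm{Irr}(G)}P_\chi(T)^{\chi(1)^2}.\]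
   Context: The Cayley graph $\mathrm{Cay}(G,S)$ has vertex set $\{v_g: g\in G\}$, with an edge joining $v_{g_i}$ to $v_{g_j}$ whenever $g_ig_j^{-1}\in S$; the voltage assignment is $\alpha(e)=\beta(g_1g_2^{-1})$ for $e$ joining $v_{g_1}$ to $v_{g_2}$. Here $\delta_{ij}$ is the Kronecker delta, $\delta_S(g)=1$ if $g\in S$ and $0$ otherwise, and $(1+T)^b$ for $b\in\mathbb{Z}$ is viewed in $\mathbb{Z}_\ell[[T]]$. Fix an embedding $\bar{\mathbb{Q}}\hookrightarrow\bar{\mathbb{Q}}_\ell$ and a finite extension $\mathcal{K}$ of $\mathbb{Q}_\ell$ containing all $n$-th roots of unity, with valuation ring $\mathcal{O}$. $\mathrm{Irr}(G)$ is the set of irreducible characters $\chi:G\to\bar{\mathbb{Q}}_\ell$ (their values lie in $\mathcal{O}$). For $\chi\in\mathrm{Irr}(G)$, $Q_\chi(T):=r\chi(1)-\sum_{t\in S}(1+T)^{\beta(t)}\chi(t)$ and $P_\chi(T):=Q_\chi(T)/\chi(1)$. *)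

From HB Require Import structures.
From mathcomp Require Import all_boot all_order all_algebra all_fingroup all_solvable all_field all_character.
From mathcomp Require Import fraction.
Set Implicit Arguments. Unset Strict Implicit. Unset Printing Implicit Defensive.
Import Order.TTheory GRing.Theory Num.Theory.
Local Open Scope ring_scope.

Notation ratF := {fraction {poly algC}}.

(* (1+T)^b for b : int, as an element of algC(T) (1+T is invertible there). *)
Definition onePT (b : int) : ratF := (@FracField.tofrac _ (1 + 'X : {poly algC})) ^ b.

Definition cstF (c : algC) : ratF := @FracField.tofrac _ (c%:P).

Definition cay_edges (gT : finGroupType) (G : {set gT}) (S : {set gT})
  : {set {set gT}} :=
  [set E : {set gT} | [exists x in G, exists y in G,
      (E == [set x; y]) && ((x * y^-1)%g \in S)]].

Definition cay_euler_char (gT : finGroupType) (G : {set gT}) (S : {set gT}) : int :=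
  (#|G|%:Z - #|cay_edges G S|%:Z)%R.

Definition gelt (gT : finGroupType) (G : {group gT}) (i : 'I_#|G|) : gT :=
  enum_val i.

Definition iw_matrix (gT : finGroupType) (G : {group gT}) (S : {set gT})
  (beta : gT -> int) : 'M[ratF]_#|G| :=
  \matrix_(i, j)
    ((#|S|)%:R * (i == j)%:R
     - ((gelt i * (gelt j)^-1)%g \in S)%:R * onePT (beta (gelt i * (gelt j)^-1)%g)).

Definition iwasawa_f (gT : finGroupType) (G : {group gT}) (S : {set gT})
  (beta : gT -> int) : ratF := \det (@iw_matrix gT G S beta).

Definition Qchi (gT : finGroupType) (G : {group gT}) (S : {set gT})
  (beta : gT -> int) (i : Iirr G) : ratF :=
  (#|S|)%:R * cstF ('chi_i 1%g) - \sum_(t in S) onePT (beta t) * cstF ('chi_i t).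

Definition Pchi (gT : finGroupType) (G : {group gT}) (S : {set gT})
  (beta : gT -> int) (i : Iirr G) : ratF :=
  @Qchi gT G S beta i / cstF ('chi_i 1%g).

(* The matrix is the group matrix (f (g_i g_j^-1))_(i,j) of the class function
   f x = r [x = 1] - [x in S] (1+T)^(beta x).  Its transpose is the regular
   representation of the group-algebra element a = sum_x f(x) x, which is central
   because f is a class function.  The Wedderburn idempotents e_chi of algC[G] are
   complete orthogonal idempotents of rank chi(1)^2, and a central a acts on e_chi
   by the scalar chi(a)/chi(1) = P_chi(T); the determinant of sum_chi c_chi e_chi
   is prod_chi c_chi^(rank e_chi).  Since f takes values in algC(T) rather than
   algC, a is written as sum_x f(x) (|G|^-1 sum_y x^y), each averaged term being
   central over algC. *)

From HB Require Import structures.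
From mathcomp Require Import all_boot all_order all_algebra all_fingroup all_solvable all_field all_character.
From mathcomp Require Import fraction.
Import Order.TTheory GRing.Theory Num.Theory.
Local Open Scope ring_scope.
Set Implicit Arguments. Unset Strict Implicit. Unset Printing Implicit Defensive.

Section IdempotentDeterminants.
Variable F : fieldType.

Lemma det_sylvester m n (B : 'M[F]_(m, n)) (C : 'M[F]_(n, m)) :
  \det (1%:M + B *m C) = \det (1%:M + C *m B).
Proof.
pose K := block_mx (1%:M : 'M_m) B (- C) (1%:M : 'M_n).
have K_lu : K = block_mx 1%:M 0 (- C) 1%:M *m block_mx 1%:M B 0 (1%:M + C *m B).
  rewrite mulmx_block !mul1mx !mulmx0 !mul0mx ?addr0 ?add0r mulNmx.
  by rewrite mulmx1 mulNmx addrC addrK.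
have K_ul : K = block_mx (1%:M + B *m C) B 0 1%:M *m block_mx 1%:M 0 (- C) 1%:M.
  by rewrite mulmx_block !mulmx1 !mulmx0 ?mul0mx ?add0r ?addr0 mulmxN mul1mx addrK.
have := congr1 determinant K_lu; rewrite K_ul !det_mulmx det_lblock det_ublock.
by rewrite det_ublock !det1 !mul1r !mulr1.
Qed.

Lemma idempotent_mx_factor n (E : 'M[F]_n) : E *m E = E ->
  exists B : 'M_(n, \rank E), exists C : 'M_(\rank E, n),
    E = B *m C /\ C *m B = 1%:M.
Proof.
move=> EE; set r := \rank E.
pose B : 'M_(n, r) := col_ebase E *m pid_mx r.
pose C : 'M_(r, n) := pid_mx r *m row_ebase E.
have E_BC : E = B *m C.
  by rewrite /B /C mulmxA -(mulmxA _ (pid_mx r)) pid_mx_id ?rank_leq_row // mulmx_ebase.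
pose B' : 'M_(r, n) := pid_mx r *m invmx (col_ebase E).
pose C' : 'M_(n, r) := invmx (row_ebase E) *m pid_mx r.
have B'B : B' *m B = 1%:M.
  rewrite /B /B' mulmxA -(mulmxA _ (invmx _)) mulVmx ?col_ebase_unit // mulmx1.
  by rewrite pid_mx_id ?rank_leq_row // pid_mx_1.
have CC' : C *m C' = 1%:M.
  rewrite /C /C' mulmxA -(mulmxA _ (row_ebase E)) mulmxV ?row_ebase_unit // mulmx1.
  by rewrite pid_mx_id ?rank_leq_col // pid_mx_1.
exists B, C; split=> //; clearbody B C B' C'.
have := congr1 (fun X => B' *m X *m C') EE; rewrite /= {1 2}E_BC.
by rewrite E_BC !mulmxA B'B !mul1mx -!mulmxA CC' !mulmx1 => ->.
Qed.

Lemma det_add1_scale_idempotent n (E : 'M[F]_n) a : E *m E = E ->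
  \det (1%:M + a *: E) = (1 + a) ^+ \rank E.
Proof.
move=> /idempotent_mx_factor[B [C [E_BC CB]]].
rewrite {1}E_BC scalemxAl det_sylvester -scalemxAr CB -{1}(scale1r 1%:M).
by rewrite -scalerDl detZ det1 mulr1.
Qed.

Lemma mxtrace_idempotent n (E : 'M[F]_n) : E *m E = E -> \tr E = (\rank E)%:R.
Proof.
by move=> /idempotent_mx_factor[B [C [E_BC CB]]]; rewrite {1}E_BC mxtrace_mulC CB mxtrace1.
Qed.

Lemma det_sum_orthogonal_idempotents n (I : finType) (E : I -> 'M[F]_n) lam :
  (forall i, E i *m E i = E i) -> (forall i j, i != j -> E i *m E j = 0) ->
  \sum_i E i = 1%:M ->
  \det (\sum_i lam i *: E i) = \prod_i lam i ^+ \rank (E i).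
Proof.
move=> idemE orthE sumE.
(* 1 + sum_(i <- s) (lam i - 1) E_i factors into the commuting 1 + (lam i - 1) E_i. *)
have det_partial (s : seq I) : uniq s ->
    \det (1%:M + \sum_(i <- s) (lam i - 1) *: E i) = \prod_(i <- s) lam i ^+ \rank (E i).
  elim: s => [|j s IHs] /=; first by rewrite !big_nil addr0 det1.
  case/andP=> s'j uniq_s; rewrite !big_cons -IHs //.
  set X := \sum_(i <- s) _.
  have EjX : E j *m X = 0.
    rewrite mulmx_sumr big1_seq // => i /andP[_ si].
    by rewrite -scalemxAr orthE ?scaler0 //; apply: contraNneq s'j => ->.
  have -> : 1%:M + ((lam j - 1) *: E j + X) = (1%:M + (lam j - 1) *: E j) *m (1%:M + X).
    rewrite mulmxDl mul1mx mulmxDr mulmx1 -scalemxAl EjX scaler0 addr0.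
    by rewrite addrAC addrA.
  by rewrite det_mulmx det_add1_scale_idempotent // addrC subrK.
have := det_partial _ (enum_uniq I); rewrite !big_enum /= => <-.
congr determinant; rewrite -{1}sumE -big_split /=; apply: eq_bigr => i _.
by rewrite scalerBl scale1r addrC subrK.
Qed.

End IdempotentDeterminants.

Section WedderburnIdempotents.
Variables (gT : finGroupType) (G : {group gT}).
Local Notation aG := (regular_repr algC G).
Local Notation RG := (group_ring algC G).
Local Notation W := (@socle_of_Iirr gT G).
Local Notation e i := (Wedderburn_id (W i)).
Let C'G := algC'G_pchar G.

Lemma Wedderburn_subring_sub_gring i : (Wedderburn_subring (W i) <= RG)%MS.
Proof. by rewrite -(Wedderburn_sum_pchar (DecSocleType aG) C'G) (sumsmx_sup (W i)). Qed.

Lemma Wedderburn_id_gring i : (e i \in RG)%MS.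
Proof. exact: memmx_subP (Wedderburn_subring_sub_gring i) _ (Wedderburn_id_mem _). Qed.

Lemma center_gring_mulmx_Wedderburn_id i A :
  (A \in 'Z(RG))%MS -> A *m e i = 'omega_i[A] *: e i.
Proof.
move=> /center_mxP[RA cRA].
have [_ Rie eB Be] := Wedderburn_is_id_pchar C'G (W i).
have ZRi_Ae : (A *m e i \in 'Z(Wedderburn_subring (W i)))%MS.
  rewrite sub_capmx; apply/andP; split.
    have /andP[ideal_Ri _] := Wedderburn_ideal (W i).
    exact: memmx_subP ideal_Ri _ (mem_mulsmx RA Rie).
  apply/cent_mxP => B RiB.
  have RB := memmx_subP (Wedderburn_subring_sub_gring i) _ RiB.
  by rewrite mulmxA cRA // -!mulmxA Be // eB.
move: ZRi_Ae; rewrite (Wedderburn_subring_center_pchar C'G (@groupC _ G)).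
case/sub_rVP=> c; rewrite -linearZ => /(can_inj mxvecK) Ae_c.
rewrite Ae_c; congr (_ *: _).
have := congr1 (xcfun 'chi_i) Ae_c; rewrite xcfunZr xcfun_id eqxx mulr1n.
rewrite -cRA ?Wedderburn_id_gring // xcfun_mul_id // => chiA.
by rewrite unlock xcfunZl chiA mulrC mulfK ?irr1_neq0.
Qed.

Lemma Wedderburn_id_idem i : e i *m e i = e i.
Proof. by have [_ Rie eB _] := Wedderburn_is_id_pchar C'G (W i); apply: eB. Qed.

Lemma Wedderburn_id_orth i j : i != j -> e i *m e j = 0.
Proof.
move=> neq_ij; apply: Wedderburn_mulmx0 (Wedderburn_id_mem _) (Wedderburn_id_mem _).
by rewrite (can_eq (@socle_of_IirrK _ G)).
Qed.

Lemma sum_Wedderburn_id : \sum_i e i = 1%:M.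
Proof.
rewrite -(Wedderburn_sum_id_pchar (DecSocleType aG) C'G).
by rewrite [RHS](reindex _ (socle_of_Iirr_bij _)).
Qed.

Lemma rank_Wedderburn_id i : \rank (e i) = (Num.truncn ('chi_i 1%g) ^ 2)%N.
Proof.
have tr_e : \tr (e i) = 'chi_i 1%g ^+ 2.
  rewrite -(gring_op_id (Wedderburn_id_gring i)) -xcfun_repr cfReprReg cfReg_sum.
  rewrite -xcfun_rE raddf_sum (bigD1 i) //= big1 ?addr0 => [|j neq_ji].
    by rewrite xcfunZl xcfun_id eqxx mulr1n expr2.
  by rewrite xcfunZl xcfun_id (negPf neq_ji) mulr0n mulr0.
apply/eqP; rewrite -(eqr_nat algC) -mxtrace_idempotent ?Wedderburn_id_idem //.
by rewrite tr_e irr1_degree natrK natrX.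
Qed.

Definition gring_conj_avg (x : gT) : 'M[algC]_(gcard G) :=
  #|G|%:R^-1 *: \sum_(y in G) aG (x ^ y)%g.

Lemma gring_conj_avg_center x : x \in G -> (gring_conj_avg x \in 'Z(RG))%MS.
Proof.
move=> Gx; rewrite sub_capmx memmx_cent_envelop; apply/andP; split.
  rewrite linearZ linear_sum /=; apply: scalemx_sub; apply: summx_sub => y Gy.
  by apply: envelop_mx_id; rewrite groupJ.
apply/centgmxP => z Gz; rewrite -scalemxAl -scalemxAr; congr (_ *: _).
rewrite mulmx_suml mulmx_sumr [RHS](reindex_inj (mulIg z)) /=.
apply: eq_big => [y | y Gy]; first by rewrite groupMr.
by rewrite -!repr_mxM ?groupJ ?groupM // conjgM {2}/conjg mulKVg.
Qed.

Lemma gring_irr_mode_conj_avg i x :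
  x \in G -> 'omega_i[gring_conj_avg x] = 'chi_i x / 'chi_i 1%g.
Proof.
move=> Gx; rewrite unlock xcfunZl xcfunZr raddf_sum /=.
rewrite (eq_bigr (fun _ => 'chi_i x)) => [|y Gy]; last by rewrite xcfunG ?groupJ ?cfunJ.
by rewrite sumr_const -(mulr_natl ('chi_i x)) mulKf ?neq0CG // mulrC.
Qed.

End WedderburnIdempotents.

Section ClassFunctionDeterminant.
Variables (gT : finGroupType) (G : {group gT}) (L : fieldType).
Variables (phi : {rmorphism algC -> L}) (f : gT -> L).
Hypothesis fJ : forall x y, y \in G -> f (x ^ y)%g = f x.
Local Notation aG := (regular_repr algC G).

Definition group_mx : 'M[L]_#|G| := \matrix_(i, j) f (gelt i * (gelt j)^-1)%g.

Lemma tr_group_mx_regular :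
  group_mx^T = \sum_(x in G) f x *: map_mx phi (aG x).
Proof.
apply/matrixP => i j; rewrite !mxE summxE.
have [Gi Gj] : gelt i \in G /\ gelt j \in G by split; apply: enum_valP.
pose x0 := ((gelt i)^-1 * gelt j)%g.
have Gx0 : x0 \in G by rewrite groupM ?groupV.
rewrite (bigD1 x0) //= big1 ?addr0 => [|x /andP[Gx neq_x]]; last first.
  rewrite !mxE /=; case: eqP => [gix_j | _]; last by rewrite rmorph0 mulr0.
  by case/eqP: neq_x; rewrite /x0 /gelt gix_j gring_indexK ?groupM // mulKg.
rewrite !mxE /x0 /gelt mulKVg gring_valK !eqxx rmorph1 mulr1.
by rewrite -[in RHS](fJ _ (groupVr Gi)) conjgE invgK mulgA mulKVg.
Qed.

Lemma sum_regular_conj_avg :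
  \sum_(x in G) f x *: map_mx phi (aG x)
    = \sum_(x in G) f x *: map_mx phi (gring_conj_avg G x).
Proof.
have inner y : y \in G ->
    \sum_(x in G) f x *: map_mx phi (aG (x ^ y)%g) = \sum_(x in G) f x *: map_mx phi (aG x).
  move=> Gy; rewrite [RHS](reindex_inj (conjg_inj y)) /=.
  by apply: eq_big => [x | x Gx]; rewrite ?groupJr ?fJ.
have G_unit : phi (#|G|%:R^-1) * #|G|%:R = 1.
  by rewrite -(rmorph_nat phi) -rmorphM mulVf ?rmorph1 ?neq0CG.
symmetry; under eq_bigr do rewrite /gring_conj_avg map_mxZ raddf_sum scalerA mulrC -scalerA.
rewrite -scaler_sumr; under eq_bigr do rewrite scaler_sumr.
by rewrite exchange_big /= (eq_bigr _ inner) sumr_const -scaler_nat scalerA G_unit scale1r.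
Qed.

Theorem det_group_mx_class_fun :
  \det group_mx
    = \prod_(i : Iirr G) (\sum_(x in G) f x * phi ('chi_i x / 'chi_i 1%g))
        ^+ (Num.truncn ('chi_i 1%g) ^ 2)%N.
Proof.
pose E (i : Iirr G) := map_mx phi (Wedderburn_id (socle_of_Iirr i)).
have sumE : \sum_i E i = 1%:M.
  by rewrite /E -(raddf_sum (map_mx phi)) sum_Wedderburn_id; apply: map_mx1.
pose lam (i : Iirr G) := \sum_(x in G) f x * phi ('chi_i x / 'chi_i 1%g).
pose A := \sum_(x in G) f x *: map_mx phi (gring_conj_avg G x).
have A_E i : A *m E i = lam i *: E i.
  rewrite mulmx_suml scaler_suml; apply: eq_bigr => x Gx.
  rewrite -scalemxAl -map_mxM center_gring_mulmx_Wedderburn_id ?gring_conj_avg_center //.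
  by rewrite gring_irr_mode_conj_avg // map_mxZ scalerA.
have A_sum : A = \sum_i lam i *: E i.
  by rewrite -[A]mulmx1 -sumE mulmx_sumr; apply: eq_bigr => i _; apply: A_E.
rewrite -det_tr tr_group_mx_regular sum_regular_conj_avg -/A A_sum.
rewrite det_sum_orthogonal_idempotents => [|i|i j neq_ij|//].
- by apply: eq_bigr => i _; rewrite mxrank_map rank_Wedderburn_id.
- by rewrite -map_mxM Wedderburn_id_idem.
- by rewrite -map_mxM Wedderburn_id_orth ?map_mx0.
Qed.

End ClassFunctionDeterminant.

Section CayleyWeight.
Variables (gT : finGroupType) (S : {set gT}) (beta : gT -> int).

Definition cay_weight (x : gT) : ratF :=
  #|S|%:R * (x == 1%g)%:R - (x \in S)%:R * onePT (beta x).

Lemma iw_matrix_group_mx (G : {group gT}) :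
  iw_matrix G S beta = group_mx G cay_weight.
Proof.
by apply/matrixP => i j; rewrite !mxE /cay_weight -eq_mulgV1 (inj_eq enum_val_inj).
Qed.

Lemma cay_weightJ (G : {group gT}) :
    (forall g, g \in G -> (S :^ g)%g = S) ->
    (forall g a, g \in G -> a \in S -> beta (a ^ g)%g = beta a) ->
  forall x y, y \in G -> cay_weight (x ^ y)%g = cay_weight x.
Proof.
move=> nSG betaJ x y Gy.
have SxJ : ((x ^ y)%g \in S) = (x \in S) by rewrite -{1}(nSG y Gy) memJ_conjg.
rewrite /cay_weight conjg_eq1 SxJ.
have [Sx | _] := boolP (x \in S); last by rewrite !mul0r.
by rewrite betaJ.
Qed.

Lemma sum_cay_weight_irr (G : {group gT}) (i : Iirr G) : S \subset G ->
  \sum_(x in G) cay_weight x * cstF ('chi_i x / 'chi_i 1%g) = Pchi S beta i.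
Proof.
move=> sSG; rewrite /Pchi /Qchi.
have cstF_div a b : cstF (a / b) = cstF a / cstF b.
  exact: (fmorph_div (@FracField.tofrac _ \o polyC)%FUN).
under eq_bigr do rewrite cstF_div mulrA.
rewrite -mulr_suml; congr (_ / _).
under eq_bigr do rewrite /cay_weight mulrBl.
rewrite sumrB (bigD1 1%g) //= big1 ?addr0 => [|x /andP[_ /negPf ->]]; last first.
  by rewrite mulr0 mul0r.
rewrite eqxx mulr1; congr (_ - _).
rewrite [RHS]big_mkcond [LHS]big_mkcond /=; apply: eq_bigr => x _.
have [Sx | _] := boolP (x \in S); last by rewrite !mul0r if_same.
by rewrite (subsetP sSG _ Sx) mul1r.
Qed.

End CayleyWeight.

Unset Implicit Arguments.

Theorem theorem3p2 (gT : finGroupType) (G : {group gT}) (S : {set gT})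
  (l : nat) (beta : gT -> int) :
  S \subset G ->
  (forall g, g \in G -> (S :^ g)%g = S) ->
  <<S>>%g = G ->
  (S^-1)%g = S ->
  (1%g \notin S) ->
  @cay_euler_char gT G S != 0 ->
  prime l ->
  (forall g a, g \in G -> a \in S -> beta (a ^ g)%g = beta a) ->
  (exists2 s, s \in S & ~~ (l%:Z %| beta s)%Z) ->
  (forall s, s \in S -> beta (s^-1)%g = - beta s) ->
  (exists m : nat, exists h : 'I_m -> gT,
      [/\ (0 < m)%N, (forall k, h k \in S), (\prod_(k < m) h k)%g \in S &
          (beta (\prod_(k < m) h k)%g != \sum_(k < m) beta (h k) %[mod l%:Z])%Z]) ->
  @iwasawa_f gT G S beta =
    \prod_(i : Iirr G) @Pchi gT G S beta i ^+ ((Num.truncn ('chi_i 1%g)) ^ 2)%N.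
Proof.
move=> sSG nSG _ _ _ _ _ betaJ _ _ _.
rewrite /iwasawa_f iw_matrix_group_mx.
rewrite (det_group_mx_class_fun (@FracField.tofrac _ \o polyC)%FUN (cay_weightJ nSG betaJ)).
by apply: eq_bigr => i _; rewrite sum_cay_weight_irr.
Qed.
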